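(* Let $G=(V,E)$ be a finite simple graph of order $n$. For each feasible solution $(x,z)$ of the Fort Number Model $\mathrm{FN}(G)$ there is a collection $\mathcal{F}$ of pairwise disjoint forts of $G$ with $|\mathcal{F}|=\sum_{i=1}^n z_i$.
   Context: $N(u)$ denotes the neighborhood of $u$. A fort of $G$ is a non-empty set $F\subseteq V$ such that no vertex $u\in V\setminus F$ has exactly one neighbor in $F$. The Fort Number Model $\mathrm{FN}(G)$ has binary variables $x_{iv}$ ($i\in\{1,\dots,n\}$, $v\in V$) and $z_i$ ($i\in\{1,\dots,n\}$), with constraints: $z_i-\sum_{u\in V}x_{iu}\leq0$ for all $i$; $x_{iu}-x_{iv}+\sum_{w\in N(u)\setminus\{v\}}x_{iw}\geq0$ for all $i$, all $v\in V$ and all $u\in N(v)$; $\sum_{i=1}^n x_{iu}\leq1$ for all $u\in V$. Its objective is to maximize $\sum_{i=1}^n z_i$. A feasible solution is one satisfying all constraints. *)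

From mathcomp Require Import all_boot all_order.
Set Implicit Arguments. Unset Strict Implicit. Unset Printing Implicit Defensive.

Definition simple_graph (T : finType) (e : rel T) : Prop :=
  symmetric e /\ irreflexive e.

Definition nbhd (T : finType) (e : rel T) (u : T) : {set T} := [set w | e u w].

Definition is_fort (T : finType) (e : rel T) (F : {set T}) : Prop :=
  F != set0 /\ forall u, u \notin F -> #|nbhd e u :&: F| != 1.

(* Feasibility for FN(G) with n = #|T|; binary variables encoded as booleans
   (coerced to 0/1 naturals). The linear constraints are rearranged so that
   all terms are nonnegative (equivalent over the integers). *)
Definition FN_feasible (T : finType) (e : rel T)
    (x : 'I_#|T| -> T -> bool) (z : 'I_#|T| -> bool) : Prop :=
  (forall i, (z i : nat) <= \sum_(u : T) (x i u : nat)) /\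
  (forall i v u, e v u ->
      (x i v : nat) <= (x i u : nat) + \sum_(w in nbhd e u :\ v) (x i w : nat)) /\
  (forall u, \sum_(i < #|T|) (x i u : nat) <= 1).

From mathcomp Require Import all_boot all_order.

Set Implicit Arguments.
Unset Strict Implicit.
Unset Printing Implicit Defensive.

(** The layers [{u | x_iu = 1}] with [z_i = 1] form the family: the packing
    constraint [sum_i x_iu <= 1] makes distinct layers disjoint,
    [z_i <= sum_u x_iu] makes them nonempty, and the neighbourhood constraint
    says that a vertex outside a layer with a neighbour inside has a second
    one inside, i.e. each layer is a fort.  Disjoint nonempty layers are
    distinct, so there are [sum_i z_i] of them. *)

Lemma sum_nat_bool_card (I : finType) (P : pred I) : \sum_i (P i : nat) = #|P|.
Proof.
rewrite -sum1_card [RHS]big_mkcond.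
by apply: eq_bigr => i _; rewrite unfold_in; case: (P i).
Qed.

Lemma card_imset_disjoint (I T : finType) (A : I -> {set T}) (P : {pred I}) :
    {in P &, forall i j, i != j -> [disjoint A i & A j]} ->
    {in P, forall i, A i != set0} ->
  #|A @: P| = #|P|.
Proof.
move=> disjA nzA; apply: card_in_imset => i j Pi Pj eqAij.
apply: contraTeq (nzA j Pj) => neq_ij.
by have := disjA i j Pi Pj neq_ij; rewrite -setI_eq0 eqAij setIid negbK.
Qed.

Lemma is_fort_indicator (T : finType) (e : rel T) (X : pred T) :
    symmetric e ->
    [set u | X u] != set0 ->
    (forall v u, e v u ->
      (X v : nat) <= X u + \sum_(w in nbhd e u :\ v) (X w : nat)) ->
  is_fort e [set u | X u].
Proof.
move=> e_sym nzF X_closed; split=> // u; rewrite inE => Xu.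
apply/negP => /cards1P [v NuF].
have /setIP [] : v \in nbhd e u :&: [set u | X u] by rewrite NuF set11.
rewrite !inE => euv Xv.
have := X_closed v u; rewrite e_sym euv Xv (negbTE Xu) => /(_ isT).
rewrite big1 // => w; rewrite !inE => /andP [w_neq_v euw].
apply/eqP; rewrite eqb0; apply: contra w_neq_v => Xw.
by rewrite -in_set1 -NuF !inE euw.
Qed.

Section Layers.

Variables (T : finType) (n : nat) (x : 'I_n -> T -> bool).

Definition layer i : {set T} := [set u | x i u].

Lemma card_layer i : #|layer i| = \sum_u (x i u : nat).
Proof. by rewrite sum_nat_bool_card; apply: eq_card => u; rewrite inE. Qed.

Lemma layers_disjoint :
    (forall u, \sum_i (x i u : nat) <= 1) ->
  forall i j, i != j -> [disjoint layer i & layer j].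
Proof.
move=> packed i j neq_ij; rewrite -setI_eq0; apply/set0Pn => -[u].
rewrite !inE => /andP [xiu xju].
have := packed u; rewrite sum_nat_bool_card => /card_le1_eqP /(_ i j xiu xju) eq_ji.
by rewrite eq_ji eqxx in neq_ij.
Qed.

End Layers.

Theorem theorem7p1 (T : finType) (e : rel T) (He : simple_graph e)
    (x : 'I_#|T| -> T -> bool) (z : 'I_#|T| -> bool) :
  FN_feasible e x z ->
  exists FF : {set {set T}},
    (forall F, F \in FF -> is_fort e F) /\
    (forall F1 F2, F1 \in FF -> F2 \in FF -> F1 != F2 -> [disjoint F1 & F2]) /\
    #|FF| = \sum_(i < #|T|) (z i : nat).
Proof.
case: He => e_sym _ [z_le [x_closed packed]].
have nz_layer i : z i -> layer x i != set0.
  by move=> zi; rewrite -card_gt0 card_layer; have := z_le i; rewrite zi.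
exists [set layer x i | i in z]; split; [|split].
- move=> F /imsetP [i zi ->].
  exact: is_fort_indicator e_sym (nz_layer i zi) (x_closed i).
- move=> F1 F2 /imsetP [i _ ->] /imsetP [j _ ->] neq_layers.
  by apply: (layers_disjoint packed); apply: contra_neq neq_layers => ->.
- rewrite sum_nat_bool_card; apply: (card_imset_disjoint _ nz_layer) => i j _ _.
  exact: layers_disjoint.
Qed.
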